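(* Let $q>0$, $d\ge0$ and $\mathcal{D}=\{(b_1,B_1),\ldots,(b_d,B_d)\}\subseteq[q]\times(2^{[q]}\smallsetminus\{\emptyset\})$ with $|B_j|\ge2$ for each $j\in[d]$. Then: (1) $\mathcal{E}_{\mathcal{D}}$ is minimally generated by $\varepsilon_{\mathcal{D},1},\ldots,\varepsilon_{\mathcal{D},q}$; (2) $Q(\mathcal{D})=Q(\mathcal{D}\cup\{(b,B)\})$ for every $(b,B)\in{\sf Div}(\mathcal{E}_{\mathcal{D}})$; (3) if $(b,B)\in{\sf Div}(\mathcal{E}_{\mathcal{D}})$ and $b\notin B$, then $b\in{\sf Base}(\mathcal{D})$.
   Context: Let $\mathsf k$ be a field and $S_{[q]}=\mathsf k[y_A:\emptyset\ne A\subseteq[q]]$. For $\mathcal{D}\subseteq[q]\times(2^{[q]}\smallsetminus\{\emptyset\})$ let $Q(\mathcal{D})=\{A\subseteq[q]: A\ne\emptyset,\ A\cap B\ne\emptyset\text{ for all }(b,B)\in\mathcal{D}\text{ with }b\in A\}$, $\varepsilon_{\mathcal{D},i}=\prod_{A\in Q(\mathcal{D}),\,i\in A}y_A$ for $i\in[q]$, and $\mathcal{E}_{\mathcal{D}}=(\varepsilon_{\mathcal{D},1},\ldots,\varepsilon_{\mathcal{D},q})$. ${\sf Base}(\mathcal{D})=\{b_1,\dots,b_d\}$. A divisibility relation on $\mathcal{E}_{\mathcal{D}}$ is a pair $(b,B)$ with $b\in[q]$, $\emptyset\ne B\subseteq[q]$ and $\varepsilon_{\mathcal{D},b}\mid\mathrm{lcm}(\varepsilon_{\mathcal{D},i}:i\in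 B)$; ${\sf Div}(\mathcal{E}_{\mathcal{D}})$ is the set of all these. *)

From HB Require Import structures.
From mathcomp Require Import all_boot all_order all_algebra.
From mathcomp Require Import mpoly.
Set Implicit Arguments. Unset Strict Implicit. Unset Printing Implicit Defensive.
Import GRing.Theory.
Local Open Scope ring_scope.

(* [q] = 'I_q.  The variables y_A of S_[q] are indexed by the nonempty
   subsets A of [q]; we number them via enum_rank. *)
Definition nesub (q : nat) := {A : {set 'I_q} | A != set0}.
Definition nvars (q : nat) : nat := #|{: nesub q}|.
Definition yidx (q : nat) (A : nesub q) : 'I_(nvars q) := enum_rank A.

Definition Sq (k : fieldType) (q : nat) := {mpoly k[nvars q]}.

Definition pairset (q : nat) := {set ('I_q * {set 'I_q})}.

Definition Qset (q : nat) (D : pairset q) : {set {set 'I_q}} :=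
  [set A : {set 'I_q} | (A != set0) &&
     [forall p in D, (p.1 \in A) ==> (A :&: p.2 != set0)]].

Definition Base (q : nat) (D : pairset q) : {set 'I_q} := [set p.1 | p in D].

(* exponent vector of eps_{D,i} = prod_{A in Q(D), i in A} y_A *)
Definition eps_mon (q : nat) (D : pairset q) (i : 'I_q) : 'X_{1..nvars q} :=
  (\sum_(A : nesub q | (val A \in Qset D) && (i \in val A)) U_(yidx A))%MM.

Definition eps (k : fieldType) (q : nat) (D : pairset q) (i : 'I_q) : Sq k q :=
  'X_[eps_mon D i].

(* lcm of the monomials eps_{D,i}, i in B (lcm of monomials = componentwise
   max of exponent vectors) *)
Definition eps_lcm (k : fieldType) (q : nat) (D : pairset q) (B : {set 'I_q})
  : Sq k q :=
  'X_[\big[@mlcm _/0%MM]_(i in B) eps_mon D i].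

Definition sdvd (k : fieldType) (q : nat) (f g : Sq k q) : Prop :=
  exists h : Sq k q, g = h * f.

Definition DivRel (k : fieldType) (q : nat) (D : pairset q)
  (b : 'I_q) (B : {set 'I_q}) : Prop :=
  B != set0 /\ sdvd (eps k D b) (eps_lcm k D B).

Definition in_ideal_others (R : comRingType) (q : nat) (g : 'I_q -> R)
  (i : 'I_q) (f : R) : Prop :=
  exists c : 'I_q -> R, f = \sum_(j < q | j != i) c j * g j.

(* The ideal (g 1, ..., g q) is minimally generated by g 1, ..., g q:
   no generator lies in the ideal generated by the others (equivalently, no
   proper subfamily generates the same ideal). *)
Definition minimally_generated (R : comRingType) (q : nat) (g : 'I_q -> R)
  : Prop :=
  forall i : 'I_q, ~ in_ideal_others g i (g i).

From HB Require Import structures.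
From mathcomp Require Import all_boot all_order all_algebra.
From mathcomp Require Import mpoly.
Set Implicit Arguments. Unset Strict Implicit. Unset Printing Implicit Defensive.
Import GRing.Theory.

(* Everything is read off by evaluating monomials at a 0/1 point that kills a
   chosen set T of variables: 'X_[m] evaluates to 1 if m avoids T and to 0
   otherwise.  Killing y_A for a single A in Q(D) containing b shows that a
   divisibility relation (b, B) forces A to meet B, which is parts (2) and (3)
   (for (3) take A = {b}, which lies in Q(D) when b is not in Base(D)).
   Killing the y_A with i not in A sends eps_i to 1 and every other eps_j to 0,
   because the complement of {i} lies in Q(D) as soon as all |B_j| >= 2; this
   is part (1). *)

Local Open Scope ring_scope.

Section Monomials.

Variables (R : comNzRingType) (n : nat).
Implicit Types (m : 'X_{1..n}) (T : {set 'I_n}).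

Lemma big_mlcm_gt0 (I : finType) (B : {pred I}) (ms : I -> 'X_{1..n}) t :
  (0 < (\big[@mlcm _/0%MM]_(i in B) ms i) t)%N -> exists2 i, i \in B & (0 < ms i t)%N.
Proof.
elim/big_rec: _ => [|i L iB IHL]; first by rewrite mnm0E.
rewrite mnmE; case: (posnP (ms i t)) => [-> | mit _]; last by exists i.
by rewrite max0n.
Qed.

Definition zero_on T : 'I_n -> R := fun s => (s \notin T)%:R.

Lemma meval_zero_onX T m :
  meval (zero_on T) 'X_[m] = [forall t in T, m t == 0%N]%:R.
Proof.
rewrite mevalX /zero_on; case: forall_inP => [m0 | /forall_inP].
  apply: big1 => s _; case: (boolP (s \in T)) => sT; last by rewrite expr1n.
  by rewrite (eqP (m0 s sT)).
rewrite negb_forall_in => /exists_inP[t tT mt].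
by rewrite (bigD1 t) //= tT expr0n (negbTE mt) mul0r.
Qed.

Lemma forall_in_set1 (I : finType) (P : pred I) (t : I) :
  [forall s in [set t], P s] = P t.
Proof. by apply/forall_inP/idP => [-> // | Pt s /set1P ->]; rewrite ?inE. Qed.

Lemma mpolyX_dvd_supp (h : {mpoly R[n]}) m m' (t : 'I_n) :
  'X_[m'] = h * 'X_[m] -> (0 < m t)%N -> (0 < m' t)%N.
Proof.
move=> /(congr1 (meval (zero_on [set t]))) + mt.
rewrite mevalM !meval_zero_onX !forall_in_set1 (eqn0Ngt (m t)) mt mulr0 lt0n.
by case: eqP => // _ /eqP; rewrite oner_eq0.
Qed.

Lemma mpolyX_notin_ideal_others (q : nat) (m : 'I_q -> 'X_{1..n}) (i : 'I_q) T :
  (forall t, t \in T -> m i t = 0%N) ->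
  (forall j, j != i -> exists2 t, t \in T & (0 < m j t)%N) ->
  ~ in_ideal_others (fun j => 'X_[m j] : {mpoly R[n]}) i 'X_[m i].
Proof.
move=> mi_off_T mj_on_T [c /(congr1 (meval (zero_on T)))].
have mi_zero : [forall t in T, m i t == 0%N] by apply/forall_inP => t /mi_off_T ->.
rewrite meval_zero_onX mi_zero raddf_sum big1 => [/eqP | j /mj_on_T[t tT mjt]].
  by rewrite oner_eq0.
rewrite /= mevalM meval_zero_onX; case: forall_inP => [/(_ t tT) | _]; last by rewrite mulr0.
by rewrite (gtn_eqF mjt).
Qed.

End Monomials.

Section Epsilon.

Variables (q : nat) (D : pairset q).
Implicit Types (b i j : 'I_q) (A B : {set 'I_q}).

Lemma eps_monE i (A : nesub q) :
  eps_mon D i (yidx A) = ((val A \in Qset D) && (i \in val A)) :> nat.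
Proof.
rewrite /eps_mon mnm_sumE big_mkcond (bigD1 A) //= big1 ?addn0 => [|A' A'A].
  by rewrite mnm1E eqxx; case: ifP.
by rewrite mnm1E /yidx (inj_eq enum_rank_inj) (negbTE A'A); case: ifP.
Qed.

Lemma Qset_neq0 A : A \in Qset D -> A != set0.
Proof. by rewrite inE => /andP[]. Qed.

Lemma DivRel_meet (k : fieldType) b B A :
  DivRel k D b B -> A \in Qset D -> b \in A -> A :&: B != set0.
Proof.
move=> [_ [h lcm_eq]] AQ bA; pose t := yidx (exist _ A (Qset_neq0 AQ)).
have eps_b_t : (0 < eps_mon D b t)%N by rewrite eps_monE /= AQ bA.
have [i iB] := big_mlcm_gt0 (mpolyX_dvd_supp lcm_eq eps_b_t).
by rewrite eps_monE lt0b => /andP[_ iA]; apply/set0Pn; exists i; rewrite inE iA.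
Qed.

Lemma in_Qset_setU1 p A :
  (A \in Qset (D :|: [set p])) =
  (A \in Qset D) && ((p.1 \in A) ==> (A :&: p.2 != set0)).
Proof.
rewrite !inE -andbA; congr (_ && _).
apply/forall_inP/andP => [Qp | [/forall_inP QD Qp] r].
  by split; [apply/forall_inP => r rD | ]; apply: Qp; rewrite !inE ?rD ?eqxx ?orbT.
by rewrite !inE => /orP[/QD | /eqP ->].
Qed.

Lemma Qset_DivRel (k : fieldType) b B :
  DivRel k D b B -> Qset D = Qset (D :|: [set (b, B)]).
Proof.
move=> bB; apply/setP => A; rewrite in_Qset_setU1; case AQ: (A \in Qset D) => //=.
by apply/esym/implyP => /(DivRel_meet bB AQ).
Qed.

Lemma set1_in_Qset b : b \notin Base D -> [set b] \in Qset D.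
Proof.
move=> bD; rewrite inE; apply/andP; split; first by apply/set0Pn; exists b; rewrite inE.
apply/forall_inP => p pD; apply/implyP.
by move/set1P=> pb; case/negP: bD; apply/imsetP; exists p; rewrite -?pb.
Qed.

Lemma DivRel_Base (k : fieldType) b B :
  DivRel k D b B -> b \notin B -> b \in Base D.
Proof.
move=> bB bNB; apply: contraT => /set1_in_Qset bQ.
have /set0Pn[i] := DivRel_meet bB bQ (set11 b).
by rewrite !inE => /andP[/eqP ->]; rewrite (negbTE bNB).
Qed.

Hypothesis D_card_ge2 : forall p, p \in D -> (2 <= #|p.2|)%N.

Lemma setC1_in_Qset i j : j != i -> [set~ i] \in Qset D.
Proof.
move=> ji; rewrite inE; apply/andP; split; first by apply/set0Pn; exists j; rewrite !inE.
apply/forall_inP => p /D_card_ge2; rewrite (cardsD1 i) => p2_ge2; apply/implyP => _.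
have : (0 < #|p.2 :\ i|)%N by case: (i \in p.2) p2_ge2 => [|/ltnW].
by rewrite card_gt0 setDE setIC.
Qed.

Lemma eps_minimally_generated (k : fieldType) : minimally_generated (eps k D).
Proof.
move=> i; apply: (mpolyX_notin_ideal_others
  (T := [set yidx A | A in [pred A : nesub q | (val A \in Qset D) && (i \notin val A)]])).
  by move=> _ /imsetP[A /andP[AQ iA] ->]; rewrite eps_monE AQ (negbTE iA).
move=> j ji; have AQ := setC1_in_Qset ji.
pose A : nesub q := exist _ [set~ i] (Qset_neq0 AQ).
exists (yidx A); first by apply/imsetP; exists A; rewrite // inE /= AQ !inE eqxx.
by rewrite eps_monE /= AQ !inE ji.
Qed.

End Epsilon.

Theorem proposition3p3 (k : fieldType) (q : nat) (D : pairset q) :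
  (0 < q)%N ->
  (forall p, p \in D -> (2 <= #|p.2|)%N) ->
  [/\ minimally_generated (eps k D),
      (forall (b : 'I_q) (B : {set 'I_q}), DivRel k D b B ->
         Qset D = Qset (D :|: [set (b, B)]))
    & (forall (b : 'I_q) (B : {set 'I_q}), DivRel k D b B -> b \notin B ->
         b \in Base D)].
Proof.
move=> _ D_card_ge2; split.
- exact: eps_minimally_generated.
- exact: Qset_DivRel.
- exact: DivRel_Base.
Qed.
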